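(* Let $n\ge2$ and let $\mathcal G_n$, $\mathcal N_{0,n}$ be as in the context. Let $D=\Theta((\gamma,g,\mu),C(\mu\eta))$ be a compact open bisection in $\mathcal G_n$, where $\gamma,\mu,\eta\in X^*$ and $g\in\mathfrak G_n$. Then the following are equivalent: (1) for some $h\in\mathcal N_{0,n}$, $[(\varnothing,h,\varnothing),\mathbf 1^\infty]\in\overline D$; (2) for all $h\in\mathcal N_{0,n}$, $[(\varnothing,h,\varnothing),\mathbf 1^\infty]\in\overline D$.
   Context: Let $X=\{\mathbf 0,\mathbf 1\}$, $X^*$ the finite words (with empty word $\varnothing$), $X^\omega$ the infinite words, $C(\eta)=\{\eta w:w\in X^\omega\}$, $\mathbf 1^\infty$ the infinite word of ones. Fix $n\ge2$, a primitive polynomial $f_n$ of degree $n$ over $\mathbb F_2$ with root $\alpha$, and $\operatorname{Tr}(\beta)=\beta+\beta^2+\dots+\beta^{2^{n-1}}\in\mathbb F_2$. $\mathfrak G_n$ is the group of automorphisms of the binary rooted tree $X^*$ generated by $a$ ($a\cdot(\mathbf 0w)=\mathbf 1w$, $a\cdot(\mathbf 1w)=\mathbf 0w$) and $\iota_n(\beta)$, $\beta\in\mathbb F_{2^n}$, where $\iota_n(\beta)\cdot(\mathbf 0w)=\mathbf 0(a^{\operatorname{Tr}(\beta)}\cdot w)$, $\iota_n(\beta)\cdot(\mathbf 1w)=\mathbf 1(\iota_n(\alpha\beta)\cdot w)$; restrictions $g|_x$ are given by $g\cdot(xw)=(g\cdot x)(g|_x\cdot w)$. $\mathcal N_{0,n}=\iota_n(\mathbb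 F_{2^n})$. $\mathcal G_n$ is the groupoid of germs of the action of the inverse semigroup $\{(\eta,g,\mu)\}\cup\{0\}$ on $X^\omega$ with $(\eta,g,\mu):C(\mu)\to C(\eta)$, $\mu w\mapsto\eta(g\cdot w)$; germs $[(\eta,g,\mu),w]$, $w\in C(\mu)$, with $[(\eta,g,\mu),w]=[(\eta',g',\mu'),w']$ iff $w=w'$ and some finite prefix $\nu=\mu\epsilon=\mu'\epsilon'$ of $w$ satisfies $\eta(g\cdot\epsilon)=\eta'(g'\cdot\epsilon')$ and $g|_\epsilon=g'|_{\epsilon'}$. For $s=(\eta,g,\mu)$ and open $U\subseteq C(\mu)$, $\Theta(s,U)=\{[s,w]:w\in U\}$; these open bisections form a basis of the (non-Hausdorff) topology. $\overline D$ denotes closure in $\mathcal G_n$. *)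

From HB Require Import structures.
From mathcomp Require Import all_boot all_order all_algebra all_field.
Set Implicit Arguments. Unset Strict Implicit. Unset Printing Implicit Defensive.
Import GRing.Theory.
Local Open Scope ring_scope.

(* Letters: false = 0, true = 1.  Finite words: seq bool.
   Infinite words: nat -> bool. *)

Section Defs.
Variables (n : nat) (F : finFieldType) (alpha : F).

(* Tr(beta) = beta + beta^2 + ... + beta^(2^(n-1)), an element of F_2 = {0,1};
   trb beta is true iff Tr(beta) = 1. *)
Definition Tr (b : F) : F := \sum_(i < n) b ^+ (2 ^ i).
Definition trb (b : F) : bool := Tr b == 1.

Inductive gen := GA | GI of F.

Definition flip (w : seq bool) : seq bool :=
  match w with [::] => [::] | x :: w' => ~~ x :: w' end.

Fixpoint iota_act (b : F) (w : seq bool) {struct w} : seq bool :=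
  match w with
  | [::] => [::]
  | false :: w' => false :: (if trb b then flip w' else w')
  | true :: w' => true :: iota_act (alpha * b) w'
  end.

Definition act_gen (x : gen) (w : seq bool) : seq bool :=
  match x with GA => flip w | GI b => iota_act b w end.

(* An element of the group frak G_n is given by a word [x1; ...; xk] in the
   generators, and acts as the product x1 x2 ... xk.  Two words represent the
   same group element iff they act identically on X^*. *)
Definition actw (s : seq gen) (w : seq bool) : seq bool :=
  foldr act_gen w s.

(* restriction g|_x, determined by g.(x w) = (g.x)(g|_x . w) *)
Definition res (s : seq gen) (x : seq bool) (w : seq bool) : seq bool :=
  drop (size x) (actw s (x ++ w)).

Record isg := ISG { tgt : seq bool; grp : seq gen; src : seq bool }.

Definition cyl (p : seq bool) (w : nat -> bool) : Prop := mkseq w (size p) = p.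

Definition is_open (U : (nat -> bool) -> Prop) : Prop :=
  forall w, U w -> exists k, forall v, mkseq v k = mkseq w k -> U v.

Definition germ_eq (t t' : isg) (w : nat -> bool) : Prop :=
  exists k (e e' : seq bool),
    mkseq w k = src t ++ e /\ mkseq w k = src t' ++ e' /\
    tgt t ++ actw (grp t) e = tgt t' ++ actw (grp t') e' /\
    (forall u, res (grp t) e u = res (grp t') e' u).

(* germs: pairs (s, w) with w in C(src s), representing [s, w] *)
Definition germ := (isg * (nat -> bool))%type.
Definition valid_germ (x : germ) : Prop := cyl (src x.1) x.2.

(* membership of a germ in Theta(t, U), U open, U ⊆ C(src t) *)
Definition in_Theta (x : germ) (t : isg) (U : (nat -> bool) -> Prop) : Prop :=
  U x.2 /\ germ_eq t x.1 x.2.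

(* x lies in the closure of Theta(s, V): every basic open neighbourhood
   Theta(t, U) of x meets Theta(s, V) *)
Definition in_closure (x : germ) (s : isg) (V : (nat -> bool) -> Prop) : Prop :=
  forall (t : isg) (U : (nat -> bool) -> Prop),
    is_open U -> (forall w, U w -> cyl (src t) w) -> in_Theta x t U ->
    exists y : germ, valid_germ y /\ in_Theta y t U /\ in_Theta y s V.

End Defs.

Arguments GA {F}.
Definition ones : nat -> bool := fun _ => true.

(* If [(∅, ι(β), ∅), 1^∞] lies in the closure of D, then at points of every
   cylinder C(1^M) some germ of D equals a germ of ι(β).  Comparing lengths and
   prefixes shows that μη is a word of ones and |γ| = |μ|.  Every g ∈ 𝔊_n maps
   1^j z to u 1^(j-|u|) ι(α^j c)(z) for fixed u, c and all large j, so γu is a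
   word of ones as well and D maps μ 1^j z to 1^(|μ|+j) ι(α^j c)(z).
   For any other β', the germs of D and ι(β') at 1^N 0 1^∞, N = |μ| + j, then
   agree as soon as Tr(α^j c) = Tr(α^N β').  Since α is primitive,
   α^j (c + α^|μ| β') equals α^2 + α, whose trace is 0, for arbitrarily large j;
   the corresponding points 1^N 0 1^∞ tend to 1^∞ and witness the closure
   condition for β'. *)

From HB Require Import structures.
From mathcomp Require Import all_boot all_order all_algebra all_field zify.
Set Implicit Arguments. Unset Strict Implicit. Unset Printing Implicit Defensive.
Import GRing.Theory.
Local Open Scope ring_scope.

Lemma catI (T : Type) (s : seq T) : injective (cat s).
Proof. by move=> e e' /(congr1 (drop (size s))); rewrite !drop_size_cat. Qed.

Lemma nseq_catl (T : eqType) (x : T) s s' :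
  s ++ s' = nseq (size (s ++ s')) x -> s = nseq (size s) x.
Proof.
by rewrite size_cat nseqD => /eqP; rewrite eqseq_cat ?size_nseq // => /andP[/eqP].
Qed.

Lemma take_mkseq (T : Type) (f : nat -> T) k k' :
  (k <= k')%N -> take k (mkseq f k') = mkseq f k.
Proof. by move=> le_kk'; rewrite /mkseq -map_take take_iota (minn_idPl le_kk'). Qed.

Lemma mkseq_true (f : nat -> bool) k :
  (forall i, (i < k)%N -> f i) -> mkseq f k = nseq k true.
Proof.
move=> fT; apply: (@eq_from_nth _ true); rewrite size_mkseq ?size_nseq // => i lt_ik.
by rewrite nth_mkseq // nth_nseq lt_ik fT.
Qed.

Definition ones_but (N : nat) : nat -> bool := fun i => i != N.

Lemma mkseq_ones k : mkseq ones k = nseq k true.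
Proof. exact: mkseq_true. Qed.

Lemma mkseq_ones_but N k : (k <= N)%N -> mkseq (ones_but N) k = nseq k true.
Proof.
by move=> le_kN; apply: mkseq_true => i lt_ik; rewrite /ones_but neq_ltn (leq_trans lt_ik).
Qed.

Lemma mkseq_ones_butS N : mkseq (ones_but N) N.+1 = rcons (nseq N true) false.
Proof. by rewrite mkseqS mkseq_ones_but // /ones_but eqxx. Qed.

Lemma cyl_open p : is_open (cyl p).
Proof. by move=> w wp; exists (size p) => v; rewrite /cyl => ->. Qed.

Lemma cyl_nseq_true p w M : (size p <= M)%N ->
  mkseq w M = nseq M true -> cyl p w -> p = nseq (size p) true.
Proof.
by move=> le_pM wM wp; rewrite -wp size_mkseq -(take_mkseq w le_pM) wM take_nseq.
Qed.

Section Trace.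

Variables (n : nat) (F : finFieldType).

Lemma Tr0 : Tr n (0 : F) = 0.
Proof. by rewrite /Tr big1 // => i _; rewrite expr0n expn_eq0. Qed.

Lemma trb0 : trb n (0 : F) = false.
Proof. by rewrite /trb Tr0 eq_sym oner_eq0. Qed.

Hypothesis cardF : #|F| = (2 ^ n)%N.
Hypothesis n_gt0 : (0 < n)%N.

Lemma pchar_F2 : (2 \in [pchar F])%N.
Proof. exact: card_finPcharP cardF _. Qed.

Lemma exprDn_pchar2 (x y : F) i : (x + y) ^+ (2 ^ i) = x ^+ (2 ^ i) + y ^+ (2 ^ i).
Proof. by apply: exprDn_pchar; rewrite (eq_pnat _ (pcharf_eq pchar_F2)) pnatX pnat_id. Qed.

Lemma Tr_add (x y : F) : Tr n (x + y) = Tr n x + Tr n y.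
Proof. by rewrite /Tr -big_split; apply: eq_bigr => i _; apply: exprDn_pchar2. Qed.

Lemma Tr_sqr (x : F) : Tr n (x ^+ 2) = Tr n x.
Proof.
case: n n_gt0 cardF => // m _ cardF'.
rewrite /Tr big_ord_recr big_ord_recl /= addrC; congr (_ + _).
  by rewrite -exprM -expnS -cardF' expf_card.
by apply: eq_bigr => i _; rewrite -exprM -expnS.
Qed.

Lemma Tr_trb (x : F) : Tr n x = (trb n x)%:R.
Proof.
have : Tr n x ^+ 2 = Tr n x.
  rewrite -[RHS]Tr_sqr /Tr (big_morph _ (fun a b => exprDn_pchar2 a b 1) (expr0n _ 2)).
  by apply: eq_bigr => i _; rewrite exprAC.
move/eqP; rewrite expr2 -{3}[Tr n x]mulr1 -subr_eq0 -mulrBr mulf_eq0 subr_eq0 /trb.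
by case/orP=> /eqP->; rewrite ?eqxx // eq_sym oner_eq0.
Qed.

Lemma trb_add (x y : F) : trb n (x + y) = trb n x (+) trb n y.
Proof.
rewrite {1}/trb Tr_add (Tr_trb x) (Tr_trb y).
case: (trb n x); case: (trb n y);
  by rewrite /= ?addr0 ?add0r ?(addrr_pchar2 pchar_F2) ?eqxx // eq_sym oner_eq0.
Qed.

Lemma trb_eq_of_Tr_add_eq0 (x y : F) : Tr n (x + y) = 0 -> trb n x = trb n y.
Proof.
move=> Tr_xy0; have := trb_add x y; rewrite /trb Tr_xy0 eq_sym oner_eq0 -!/(trb _ _).
by case: (trb n x); case: (trb n y).
Qed.

Lemma Tr_sqr_add (x : F) : Tr n (x ^+ 2 + x) = 0.
Proof. by rewrite Tr_add Tr_sqr (addrr_pchar2 pchar_F2). Qed.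

End Trace.

Section PrimitiveRoot.

Variables (n : nat) (F : finFieldType) (alpha : F).
Hypothesis cardF : #|F| = (2 ^ n)%N.
Hypothesis n_ge2 : (2 <= n)%N.
Hypothesis alpha_prim : ((2 ^ n).-1).-primitive_root alpha.

Lemma prim_root_expr_ge (y : F) B : y != 0 -> exists2 j, (B <= j)%N & alpha ^+ j = y.
Proof.
move=> y_neq0; have L_gt0 := prim_order_gt0 alpha_prim.
have yL : y ^+ (2 ^ n).-1 = 1.
  by apply: (mulfI y_neq0); rewrite mulr1 -exprS prednK ?expn_gt0 // -cardF expf_card.
have [i ->] := prim_rootP alpha_prim yL.
exists (i + B * (2 ^ n).-1)%N; first by rewrite (leq_trans _ (leq_addl _ _)) // leq_pmulr.
by rewrite exprD mulnC exprM (prim_expr_order alpha_prim) expr1n mulr1.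
Qed.

Lemma sqr_add_prim_root_neq0 : alpha ^+ 2 + alpha != 0.
Proof.
have L_gt2 : (2 < (2 ^ n).-1)%N.
  by rewrite -ltnS prednK ?expn_gt0 // (leq_trans _ (leq_pexp2l _ n_ge2)).
have alpha_neq0 : alpha != 0.
  by rewrite (prim_root_eq0 alpha_prim) -lt0n (ltn_trans _ L_gt2).
have alpha_neq1 : alpha != 1.
  rewrite -[alpha]expr1 -(expr0 alpha) (eq_prim_root_expr alpha_prim).
  by rewrite mod0n modn_small // ltnW.
rewrite expr2 -{3}[alpha]mulr1 -mulrDr mulf_neq0 //.
by rewrite -(GRing.subr_pchar2 (pchar_F2 cardF)) subr_eq0.
Qed.

Lemma exists_trb_exprM_eq (c c' : F) B :
  exists2 j, (B <= j)%N & trb n (alpha ^+ j * c) = trb n (alpha ^+ j * c').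
Proof.
have [->|c_neq] := eqVneq c c'; first by exists B.
have cc'_neq0 : c + c' != 0 by rewrite -(GRing.subr_pchar2 (pchar_F2 cardF)) subr_eq0.
have [j le_Bj alpha_j] :=
  prim_root_expr_ge B (mulf_neq0 sqr_add_prim_root_neq0 (invr_neq0 cc'_neq0)).
exists j => //; apply: (trb_eq_of_Tr_add_eq0 cardF (ltnW n_ge2)).
by rewrite -mulrDr alpha_j mulfVK // Tr_sqr_add // ltnW.
Qed.

End PrimitiveRoot.

Lemma flip_size w : size (flip w) = size w.
Proof. by case: w. Qed.

Lemma flipK : involutive flip.
Proof. by case=> //= x w; rewrite negbK. Qed.

Lemma flip_take e z : take (size e) (flip (e ++ z)) = flip e.
Proof. by case: e => [|x e] /=; rewrite ?take0 ?take_size_cat. Qed.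

Lemma flip_rcons_cat e x z : flip (rcons e x ++ z) = flip (rcons e x) ++ z.
Proof. by case: e. Qed.

Section Action.

Variables (n : nat) (F : finFieldType) (alpha : F).

Lemma iota_act_size b w : size (iota_act n alpha b w) = size w.
Proof.
elim: w b => [|[] w IHw] b //=; first by rewrite IHw.
by case: trb; rewrite ?flip_size.
Qed.

Lemma iota_act_take b e z :
  take (size e) (iota_act n alpha b (e ++ z)) = iota_act n alpha b e.
Proof.
elim: e b => [|[] e IHe] b /=; first by rewrite take0.
  by rewrite IHe.
by case: trb; rewrite ?flip_take ?take_size_cat.
Qed.

Lemma act_gen_size x w : size (act_gen n alpha x w) = size w.
Proof. by case: x => [|b] /=; rewrite ?flip_size ?iota_act_size. Qed.

Lemma act_gen_take x e z :
  take (size e) (act_gen n alpha x (e ++ z)) = act_gen n alpha x e.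
Proof. by case: x => [|b] /=; rewrite ?flip_take ?iota_act_take. Qed.

Lemma actw_size s w : size (actw n alpha s w) = size w.
Proof. by elim: s => [|x s IHs] //=; rewrite act_gen_size. Qed.

Lemma actw_take s e z : take (size e) (actw n alpha s (e ++ z)) = actw n alpha s e.
Proof.
elim: s => [|x s IHs] /=; first by rewrite take_size_cat.
rewrite -[actw n alpha s (e ++ z)](cat_take_drop (size e)) IHs.
by rewrite -(actw_size s e) act_gen_take.
Qed.

Lemma actw_cat s e z : actw n alpha s (e ++ z) = actw n alpha s e ++ res n alpha s e z.
Proof. by rewrite -[LHS](cat_take_drop (size e)) actw_take. Qed.

Lemma res_cat s e e' z :
  res n alpha s (e ++ e') z = drop (size e') (res n alpha s e (e' ++ z)).
Proof. by rewrite /res -catA drop_drop size_cat addnC. Qed.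

Lemma iota_act_nseq b j z :
  iota_act n alpha b (nseq j true ++ z) = nseq j true ++ iota_act n alpha (alpha ^+ j * b) z.
Proof. by elim: j b => [|j IHj] b /=; rewrite ?mul1r // IHj exprSr mulrA. Qed.

Lemma iota_act_rcons_cat b e z : ~~ all (pred1 true) e ->
  iota_act n alpha b (rcons e true ++ z) = iota_act n alpha b (rcons e true) ++ z.
Proof.
elim: e b => [|[] e IHe] b //= e_false; first by rewrite IHe.
by case: trb; rewrite /= ?flip_rcons_cat.
Qed.

Lemma iota_act0 z : iota_act n alpha 0 z = z.
Proof. by elim: z => [|[] z IHz] //=; rewrite ?mulr0 ?IHz ?trb0. Qed.

Hypothesis cardF : #|F| = (2 ^ n)%N.
Hypothesis n_gt0 : (0 < n)%N.

Lemma iota_actD b b' z :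
  iota_act n alpha b (iota_act n alpha b' z) = iota_act n alpha (b + b') z.
Proof.
elim: z b b' => [|[] z IHz] b b' //=; first by rewrite IHz mulrDr.
by rewrite (trb_add cardF n_gt0); case: (trb n b); case: (trb n b'); rewrite /= ?flipK.
Qed.

Lemma actw_nseq_true s : exists u c, (size u <= size s)%N /\
  forall j z, (size s <= j)%N ->
    actw n alpha s (nseq j true ++ z) =
    u ++ nseq (j - size u) true ++ iota_act n alpha (alpha ^+ j * c) z.
Proof.
elim: s => [|x s [u [c [le_us hs]]]].
  by exists [::], 0; split=> // j z _; rewrite mulr0 iota_act0 subn0.
case: x => [|b].
  case: u le_us hs => [|y u] le_us hs.
    exists [:: false], c; split=> // j z le_j; rewrite /= hs 1?ltnW //.
    by case: j le_j => //= j _; rewrite subn1.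
  exists (~~ y :: u), c; split=> [|j z le_j]; first exact: leqW.
  by rewrite /= hs 1?ltnW.
have [/all_pred1P u1 | u_false] := boolP (all (pred1 true) u).
  exists [::], (b + c); split=> // j z le_j.
  rewrite /= hs 1?ltnW // u1 catA -nseqD size_nseq subnKC; last first.
    by rewrite (leq_trans le_us) // ltnW.
  by rewrite iota_act_nseq iota_actD subn0 mulrDr.
exists (iota_act n alpha b (rcons u true)), c.
rewrite iota_act_size size_rcons; split=> // j z le_j.
rewrite /= hs 1?ltnW // (_ : j - size u = (j - (size u).+1).+1)%N; last first.
  by move: le_us le_j => /=; lia.
by rewrite /= -cat_rcons iota_act_rcons_cat.
Qed.

End Action.

Local Notation iota_isg b := (ISG [::] [:: GI b] [::]).

Section Germs.

Variables (n : nat) (F : finFieldType) (alpha : F).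
Implicit Types (t : isg F) (w : nat -> bool).

Definition germ_eq_at t t' w k : Prop :=
  exists e e', [/\ mkseq w k = src t ++ e, mkseq w k = src t' ++ e',
    tgt t ++ actw n alpha (grp t) e = tgt t' ++ actw n alpha (grp t') e' &
    forall u, res n alpha (grp t) e u = res n alpha (grp t') e' u].

Lemma germ_eqP t t' w : germ_eq n alpha t t' w <-> exists k, germ_eq_at t t' w k.
Proof.
split=> [[k [e [e' [? [? [? ?]]]]]] | [k [e [e' [? ? ? ?]]]]]; by exists k, e, e'.
Qed.

Lemma germ_eq_at_sym t t' w k : germ_eq_at t t' w k -> germ_eq_at t' t w k.
Proof. by case=> e [e' [? ? ? res_ee']]; exists e', e; split=> // u; rewrite res_ee'. Qed.

Lemma germ_eq_at_trans t1 t2 t3 w k :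
  germ_eq_at t1 t2 w k -> germ_eq_at t2 t3 w k -> germ_eq_at t1 t3 w k.
Proof.
case=> [e1 [e2 [w1 w2 tgt12 res12]]] [e2' [e3 [w2' w3 tgt23 res23]]].
have e2E : e2' = e2 by apply: (@catI _ (src t2)); rewrite -w2 -w2'.
subst e2'; exists e1, e3; split=> //; first by rewrite tgt12.
by move=> u; rewrite res12.
Qed.

Lemma germ_eq_at_mono t t' w k k' :
  (k <= k')%N -> germ_eq_at t t' w k -> germ_eq_at t t' w k'.
Proof.
move=> le_kk' [e [e' [we we' tgt_ee' res_ee']]].
set r := drop k (mkseq w k').
have wk' : mkseq w k' = mkseq w k ++ r by rewrite -(take_mkseq w le_kk') cat_take_drop.
exists (e ++ r), (e' ++ r).
split; [by rewrite wk' we catA | by rewrite wk' we' catA | |].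
  by rewrite !actw_cat !catA tgt_ee' res_ee'.
by move=> u; rewrite !res_cat res_ee'.
Qed.

Lemma germ_eq_at_prefix t t' v w k :
  mkseq v k = mkseq w k -> germ_eq_at t t' w k -> germ_eq_at t t' v k.
Proof. by rewrite /germ_eq_at => ->. Qed.

Lemma germ_eq_at_size t t' w k : germ_eq_at t t' w k ->
  (size (tgt t) + size (src t') = size (tgt t') + size (src t))%N.
Proof.
case=> e [e' [we we' /(congr1 size) + _]].
move: (congr1 size we) (congr1 size we'); rewrite !size_cat !actw_size; lia.
Qed.

Lemma germ_eq_at_of_cat t t' w k e e' :
  mkseq w k = src t ++ e -> mkseq w k = src t' ++ e' ->
  (forall z, tgt t ++ actw n alpha (grp t) (e ++ z) =
             tgt t' ++ actw n alpha (grp t') (e' ++ z)) ->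
  germ_eq_at t t' w k.
Proof.
move=> we we' act_ee'; have tgt_ee' := act_ee' [::]; rewrite !cats0 in tgt_ee'.
exists e, e'; split=> // u; apply: (@catI _ (tgt t ++ actw n alpha (grp t) e)).
by rewrite -catA -actw_cat act_ee' tgt_ee' -catA -actw_cat.
Qed.

Lemma germ_eq_refl t w : cyl (src t) w -> germ_eq n alpha t t w.
Proof. by move=> wt; apply/germ_eqP; exists (size (src t)), [::], [::]; rewrite cats0 wt. Qed.

Lemma germ_eq_sym t t' w : germ_eq n alpha t t' w -> germ_eq n alpha t' t w.
Proof. by move/germ_eqP=> [k /germ_eq_at_sym tt']; apply/germ_eqP; exists k. Qed.

Lemma germ_eq_trans t1 t2 t3 w :
  germ_eq n alpha t1 t2 w -> germ_eq n alpha t2 t3 w -> germ_eq n alpha t1 t3 w.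
Proof.
move=> /germ_eqP[k t12] /germ_eqP[k' t23]; apply/germ_eqP; exists (maxn k k').
apply: germ_eq_at_trans (germ_eq_at_mono (leq_maxl k k') t12) _.
exact: germ_eq_at_mono (leq_maxr k k') t23.
Qed.

Lemma in_closure_iota_ones b s V M :
  in_closure n alpha (iota_isg b, ones) s V ->
  exists w, [/\ mkseq w M = nseq M true, V w & germ_eq n alpha s (iota_isg b) w].
Proof.
move=> closure_b.
have [//||[t w] [_ [[/= wM iota_w] [Vw s_w]]]] :=
  closure_b (iota_isg b) (cyl (nseq M true)) (@cyl_open _).
  by split; [rewrite /cyl size_nseq mkseq_ones | exact: germ_eq_refl].
exists w; split=> //; first by move: wM; rewrite /cyl size_nseq.
exact: germ_eq_trans s_w (germ_eq_sym iota_w).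
Qed.

End Germs.

Section IotaGermClosure.

Variables (n : nat) (F : finFieldType) (alpha : F).
Hypothesis cardF : #|F| = (2 ^ n)%N.
Hypothesis n_ge2 : (2 <= n)%N.
Hypothesis alpha_prim : ((2 ^ n).-1).-primitive_root alpha.
Variables (gamma mu : seq bool) (g : seq (gen F)).

Local Notation D := (ISG gamma g mu).

Definition acts_as_iota_on_ones (c : F) : Prop :=
  forall j z, (size g <= j)%N ->
    gamma ++ actw n alpha g (nseq j true ++ z) =
    nseq (size mu + j) true ++ iota_act n alpha (alpha ^+ j * c) z.

Lemma acts_as_iota_of_germ_eq b w M :
  mu = nseq (size mu) true -> (size mu + size g <= M)%N ->
  mkseq w M = nseq M true -> germ_eq n alpha D (iota_isg b) w ->
  exists c, acts_as_iota_on_ones c.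
Proof.
move=> mu1 le_M wM /germ_eqP[k D_w].
have le_muM : (size mu <= M)%N := leq_trans (leq_addr _ _) le_M.
have size_gamma : size gamma = size mu.
  by have := germ_eq_at_size D_w; rewrite /= addn0.
have [e [e' [we /= we' tgt_ee' _]]] := germ_eq_at_mono (leq_maxl k M) D_w.
set r := drop M (mkseq w (maxn k M)).
have wK : mkseq w (maxn k M) = nseq M true ++ r.
  by rewrite /r -wM -(take_mkseq w (leq_maxr k M)) cat_take_drop.
have eE : e = nseq (M - size mu) true ++ r.
  by apply: (@catI _ mu); rewrite -we wK {1}mu1 catA -nseqD subnKC.
have [u [c [le_ug g_ones]]] := actw_nseq_true alpha cardF (ltnW n_ge2) g.
have gamma_ones : gamma ++ actw n alpha g (nseq (M - size mu) true) = nseq M true.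
  move: tgt_ee'; rewrite -we' wK eE actw_cat iota_act_nseq catA => /eqP.
  rewrite eqseq_cat; first by case/andP=> /eqP.
  by rewrite size_cat actw_size !size_nseq size_gamma subnKC.
have gu_ones : gamma ++ u = nseq (size mu + size u) true.
  have := all_pred1_nseq true M; rewrite -gamma_ones -[nseq _ true]cats0 g_ones.
    by rewrite catA all_cat => /andP[/all_pred1P-> _]; rewrite size_cat size_gamma.
  by rewrite leq_subRL // addnC.
exists c => j z le_j; rewrite g_ones // catA gu_ones catA -nseqD -addnA subnKC //.
exact: leq_trans le_ug le_j.
Qed.

Lemma germ_eq_ones_but b c j :
  mu = nseq (size mu) true -> acts_as_iota_on_ones c -> (size g <= j)%N ->
  trb n (alpha ^+ j * c) = trb n (alpha ^+ (size mu + j) * b) ->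
  germ_eq n alpha D (iota_isg b) (ones_but (size mu + j)).
Proof.
move=> mu1 Dc le_j tr_eq; apply/germ_eqP; exists (size mu + j).+1.
apply: (germ_eq_at_of_cat (e := rcons (nseq j true) false)
                          (e' := rcons (nseq (size mu + j) true) false)).
- by rewrite mkseq_ones_butS nseqD -mu1 rcons_cat.
- by rewrite mkseq_ones_butS.
by move=> z; rewrite -!cats1 -!catA /= Dc // iota_act_nseq /= tr_eq.
Qed.

Lemma in_closure_of_acts_as_iota eta b c :
  mu ++ eta = nseq (size (mu ++ eta)) true -> acts_as_iota_on_ones c ->
  in_closure n alpha (iota_isg b, ones) D (cyl (mu ++ eta)).
Proof.
move=> mueta1 Dc t U U_open U_src [/= U1 t_ones].
have [k2 U_k2] := U_open _ U1.
have /germ_eqP[k1 t_k1] := t_ones.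
have [j le_j tr_eq] := exists_trb_exprM_eq cardF n_ge2 alpha_prim c (alpha ^+ size mu * b)
  (size g + k1 + k2 + size (mu ++ eta)).
have UN : U (ones_but (size mu + j)).
  by apply: U_k2; rewrite mkseq_ones mkseq_ones_but //; lia.
exists (t, ones_but (size mu + j)); split; first exact: U_src.
split; first by split=> //; apply/germ_eq_refl/U_src.
split; first by rewrite /cyl mkseq_ones_but -?mueta1 //; lia.
apply: (@germ_eq_trans _ _ _ _ (iota_isg b)) => /=.
  apply: (germ_eq_ones_but (nseq_catl mueta1) Dc); first by lia.
  by rewrite tr_eq mulrA -exprD addnC.
apply/germ_eq_sym/germ_eqP; exists k1; apply: germ_eq_at_prefix t_k1.
by rewrite mkseq_ones mkseq_ones_but //; lia.
Qed.

End IotaGermClosure.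

Theorem mainTheorem7 (n : nat) (F : finFieldType) (alpha : F) :
  (2 <= n)%N -> #|F| = (2 ^ n)%N -> ((2 ^ n).-1).-primitive_root alpha ->
  forall (gamma mu eta : seq bool) (g : seq (gen F)),
    let D := ISG gamma g mu in
    (exists b : F,
        in_closure n alpha (ISG [::] [:: GI b] [::], ones) D (cyl (mu ++ eta)))
    <->
    (forall b : F,
        in_closure n alpha (ISG [::] [:: GI b] [::], ones) D (cyl (mu ++ eta))).
Proof.
move=> n_ge2 cardF alpha_prim gamma mu eta g D.
split=> [[b closure_b] b' | closure_all]; last by exists 0; apply: closure_all.
pose M := (size (mu ++ eta) + size g)%N.
have [w [wM wV D_w]] := in_closure_iota_ones M closure_b.
have mueta1 := cyl_nseq_true (leq_addr _ _) wM wV.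
have [|c Dc] := acts_as_iota_of_germ_eq cardF n_ge2 (nseq_catl mueta1) _ wM D_w.
  by rewrite /M size_cat addnAC leq_addr.
exact: (in_closure_of_acts_as_iota cardF n_ge2 alpha_prim (b := b') mueta1 Dc).
Qed.
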